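(* If $X$ is a finite quasi-metric space, then \[ |X|_{\mathbb{Q}(q^\mathbb{R})} = \sum_{n=0}^\infty (-1)^n \,\mathrm{rk}\, \mathit{HM}_n(X)\] in $\mathbb{Q}(\!(q^\mathbb{R})\!)$, the infinite sum converging in the topology of $\mathbb{Q}(\!(q^\mathbb{R})\!)$.
   Context: A quasi-metric space is a skeletal $[0,\infty)$-enriched category ($d(x,x)=0$, triangle inequality, $d(x,y)>0$ for $x\ne y$, not necessarily symmetric). $\mathbb{Q}(q^\mathbb{R})$ is the field of generalized rational functions (fractions of finite sums $\sum a_i q^{\ell_i}$, $a_i\in\mathbb{Q}$, $\ell_i\in\mathbb{R}$), embedded in the field $\mathbb{Q}(\!(q^\mathbb{R})\!)$ of Hahn series (formal $\sum_\ell a_\ell q^\ell$ with well-ordered support), which carries the valuation topology (a series converges iff the smallest exponents of its terms tend to $\infty$). The magnitude $|X|_{\mathbb{Q}(q^\mathbb{R})}$ is the sum of all entries of the inverse of the matrix $Z_X(x,y)=q^{d(x,y)}$ (which is invertible over $\mathbb{Q}(q^\mathbb{R})$ for finite quasi-metric spaces). Magnitude homology: $\mathit{HM}_n(X)=\{\mathit{HM}^\ell_n(X)\}_{\ell\in\mathbb{R}}$, where $\mathit{HM}^\ell_n(X)$ is the degree-$n$ homology of the chain complex whose $n$-chains in grading $\ell$ are freely generated by tuples $(x_0,\dots,x_n)$ with $x_i\neq x_{i+1}$ and $d(x_0,x_1)+\cdots+d(x_{n-1},x_n)=\ell$, with boundary $\sum_i(-1)^i d^i$ where $d^i$ deletes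 $x_i$ if $d(x_{i-1},x_i)+d(x_i,x_{i+1})=d(x_{i-1},x_{i+1})$ (for interior $i$; endpoint deletions always change the distance) and is $0$ otherwise. Its rank $\mathrm{rk}\,\mathit{HM}_n(X)$ is the Hahn series $\sum_\ell \mathrm{rk}(\mathit{HM}^\ell_n(X))\,q^\ell$. *)

From HB Require Import structures.
From mathcomp Require Import all_boot all_order all_algebra.
From mathcomp Require Import reals.

Set Implicit Arguments.
Unset Strict Implicit.
Unset Printing Implicit Defensive.

Import Order.TTheory GRing.Theory Num.Theory.
Local Open Scope ring_scope.

Section Magnitude.
Variable R : realType.

(* A quasi-metric on a finite type X: a skeletal [0,oo)-enriched category. *)
Definition is_quasi_metric (X : finType) (d : X -> X -> R) : Prop :=
  [/\ forall x y, 0 <= d x y,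
      forall x, d x x = 0,
      forall x y z, d x z <= d x y + d y z
    & forall x y, x != y -> 0 < d x y].

(* A formal series sum_l f(l) q^l is represented by its coefficient
   function f : R -> rat; it is a Hahn series iff its support is
   well-ordered (every nonempty subset of the support has a least
   element). *)
Definition hahn (f : R -> rat) : Prop :=
  forall S : R -> Prop, (forall l, S l -> f l != 0) -> (exists l, S l) ->
    exists m, S m /\ (forall l, S l -> m <= l).

(* Convergence of a sequence of Hahn series s_N to h in the valuation
   topology: the smallest exponent of h - s_N tends to +oo, i.e. for
   every bound L, eventually h and s_N have the same coefficients at
   all exponents l < L. *)
Definition hahn_converges (s : nat -> R -> rat) (h : R -> rat) : Prop :=
  forall L : R, exists N0 : nat, forall N, (N0 <= N)%N ->
    forall l, l < L -> s N l = h l.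

(* The similarity matrix Z_X(x,y) = q^{d(x,y)} has inverse W over the
   Hahn series field iff  sum_z q^{d(x,z)} W(z,y) = delta_{x,y} q^0.
   Multiplication of a Hahn series by the monomial q^a shifts exponents
   by a, so the coefficient of q^l in q^{d(x,z)} W(z,y) is W(z,y)(l - d(x,z)). *)
Definition is_inverse_similarity (X : finType) (d : X -> X -> R)
    (W : X -> X -> R -> rat) : Prop :=
  forall x y l,
    \sum_(z : X) W z y (l - d x z) = (if (x == y) && (l == 0) then 1 else 0).

Section MH.
Variables (X : finType) (d : X -> X -> R).

Definition chain_len (s : seq X) : R :=
  if s is x :: s' then \sum_(r <- pairmap d x s') r else 0.

(* generators of MC^l_n: tuples (x0,...,xn) with x_i != x_{i+1} and length l *)
Definition MC (l : R) (n : nat) : {set (n.+1).-tuple X} :=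
  [set t : (n.+1).-tuple X | sorted (fun a b => a != b) t & chain_len t == l].

Definition del_at (k : nat) (s : seq X) : seq X := take k s ++ drop k.+1 s.

(* Matrix (over Q, row-vector convention) of the boundary
   MC^l_{n+1} -> MC^l_n,  sum_k (-1)^k d^k, where d^k deletes x_k if this
   preserves the length and is 0 otherwise.  Entry (i,j) is the
   coefficient of the j-th generator of degree n in the boundary of the
   i-th generator of degree n+1. *)
Definition MH_bd (l : R) (n : nat) : 'M[rat]_(#|MC l n.+1|, #|MC l n|) :=
  \matrix_(i, j)
    let t : seq X := val (enum_val (A := MC l n.+1) i) in
    let u : seq X := val (enum_val (A := MC l n) j) in
    \sum_(k < n.+2 | (chain_len (del_at k t) == chain_len t)
                     && (del_at k t == u))
       (-1) ^+ k.

(* rank of HM^l_n(X) = dim_Q (ker d_n / im d_{n+1}) *)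
Definition MH_rank (l : R) (n : nat) : nat :=
  match n with
  | 0 => #|MC l 0| - \rank (MH_bd l 0)
  | n'.+1 => \rank (kermx (MH_bd l n')) - \rank (MH_bd l n'.+1)
  end.

(* rk HM_n(X) as a Hahn series: sum_l rk(HM^l_n(X)) q^l *)
Definition rkHM (n : nat) : R -> rat := fun l => (MH_rank l n)%:R.

Definition euler_partial (N : nat) : R -> rat :=
  fun l => \sum_(n < N) (-1) ^+ n * rkHM n l.

End MH.
End Magnitude.

From HB Require Import structures.
From mathcomp Require Import all_boot all_order all_algebra.
From mathcomp Require Import reals boolp.
From mathcomp Require Import ring.
Import Order.TTheory GRing.Theory Num.Theory.
Local Open Scope ring_scope.
Set Implicit Arguments.
Unset Strict Implicit.
Unset Printing Implicit Defensive.

(* Write Z = 1 + A, where A(x, y) = q^d(x, y) for x <> y and 0 on the diagonal.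
   Nonzero distances are at least some delta > 0, so A^k only involves exponents
   >= k delta and the Neumann series Z^-1 = sum_k (-1)^k A^k converges
   coefficientwise; its coefficient of q^l at (x, y) counts, with sign (-1)^k,
   the chains x = x0 <> x1 <> ... <> xk = y of length l.  Summing over x and y
   gives sum_k (-1)^k #MC^l_k, a finite sum since MC^l_k is empty once
   k delta > l, and by rank-nullity this is the Euler characteristic
   sum_n (-1)^n rk HM^l_n of the magnitude complex in grading l.  That the
   boundary squares to zero comes from the simplicial identities: a double
   face is nonzero only if both faces preserve length (triangle inequality),
   and the two orders of deleting two points cancel. *)

Lemma big_nat_trunc (V : nmodType) (F : nat -> V) m n : (m <= n)%N ->
  (forall k, (m <= k)%N -> F k = 0) ->
  \sum_(0 <= k < n) F k = \sum_(0 <= k < m) F k.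
Proof.
move=> le_mn F0; rewrite (big_cat_nat (n := m) (leq0n m) le_mn) /=.
rewrite [X in _ + X]big_nat_cond [X in _ + X]big1 ?addr0 // => k.
by case/andP=> /andP[/F0].
Qed.

Lemma sum_faces_cancel (V : zmodType) (f : nat -> nat -> V) n :
  (forall a b, (a <= b)%N -> f b.+1 a = - f a b) ->
  \sum_(0 <= k < n.+1) \sum_(0 <= k' < n) f k k' = 0.
Proof.
move=> fN.
have -> : \sum_(0 <= k < n.+1) \sum_(0 <= k' < n) f k k' =
    \sum_(0 <= k < n.+1) \sum_(0 <= k' < n | (k' < k)%N) f k k'
  + \sum_(0 <= k < n.+1) \sum_(0 <= k' < n | ~~ (k' < k)%N) f k k'.
  by rewrite -big_split; apply: eq_bigr => k _; rewrite (bigID (fun k' => (k' < k)%N)).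
have -> : \sum_(0 <= k < n.+1) \sum_(0 <= k' < n | (k' < k)%N) f k k' =
    - \sum_(0 <= b < n) \sum_(0 <= a < n | (a <= b)%N) f a b.
  rewrite big_nat_recl // big1 ?add0r => [|a]; last by rewrite ltn0.
  rewrite -sumrN; apply: eq_bigr => b _; rewrite -sumrN.
  by apply: eq_bigr => a le_ab; rewrite fN.
apply/eqP; rewrite addrC subr_eq0; apply/eqP.
rewrite big_nat_recr //= [X in _ + X = _]big_nat_cond.
rewrite [X in _ + X = _]big1 ?addr0; last by move=> a /andP[/andP[_ ->]].
rewrite !big_mkord (exchange_big_dep xpredT) //=.
rewrite big_mkord; apply: eq_bigr => b _; rewrite big_mkord.
by apply: eq_bigl => a; rewrite -leqNgt.
Qed.

Section EulerPoincare.
Variables (F : fieldType) (dim : nat -> nat) (bd : forall n, 'M[F]_(dim n.+1, dim n)).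
Hypothesis bd_bd : forall n, bd n.+1 *m bd n = 0.

Definition homology_rank n : nat :=
  match n with
  | 0 => dim 0 - \rank (bd 0)
  | n'.+1 => \rank (kermx (bd n')) - \rank (bd n'.+1)
  end.

Lemma rank_bd_bd n : (\rank (bd n.+1) + \rank (bd n) <= dim n.+1)%N.
Proof.
have := mxrankS (introT sub_kermxP (bd_bd n)).
rewrite mxrank_ker -(leq_add2r (\rank (bd n))) subnK //; exact: rank_leq_row.
Qed.

Lemma euler_char_truncated N :
  \sum_(n < N.+1) (-1) ^+ n * (homology_rank n)%:R =
  \sum_(n < N.+1) (-1) ^+ n * (dim n)%:R - (-1) ^+ N * (\rank (bd N))%:R :> F.
Proof.
elim: N => [|N IH]; first by rewrite !big_ord1 expr0 !mul1r natrB // rank_leq_col.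
rewrite big_ord_recr /= IH [in RHS]big_ord_recr /= mxrank_ker.
have le_rk := rank_bd_bd N.
have le_rkN : (\rank (bd N) <= dim N.+1)%N := leq_trans (leq_addl _ _) le_rk.
rewrite natrB; last by rewrite leq_subRL // addnC.
rewrite natrB // exprS; ring.
Qed.

Lemma euler_poincare N : dim N = 0%N ->
  \sum_(n < N) (-1) ^+ n * (homology_rank n)%:R =
  \sum_(n < N) (-1) ^+ n * (dim n)%:R :> F.
Proof.
case: N => [|N] dimN0; first by rewrite !big_ord0.
have : (\rank (bd N) <= 0)%N by apply: leq_trans (rank_leq_row _) _; rewrite dimN0.
by rewrite leqn0 euler_char_truncated => /eqP ->; rewrite mulr0 subr0.
Qed.

End EulerPoincare.

Section QuasiMetric.
Variables (R : realType) (X : finType) (d : X -> X -> R).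
Hypothesis hd : is_quasi_metric d.
Implicit Types (x y z : X) (s : seq X).

Lemma dist_ge0 x y : 0 <= d x y. Proof. by case: hd. Qed.
Lemma dist_xx x : d x x = 0. Proof. by case: hd. Qed.
Lemma dist_triangle x y z : d x z <= d x y + d y z. Proof. by case: hd. Qed.
Lemma dist_gt0 x y : x != y -> 0 < d x y. Proof. by case: hd => _ _ _; apply. Qed.

Lemma chain_len1 x : chain_len d [:: x] = 0.
Proof. by rewrite /chain_len big_nil. Qed.

Lemma chain_len_cons2 x y s :
  chain_len d [:: x, y & s] = d x y + chain_len d (y :: s).
Proof. by rewrite /chain_len /= big_cons. Qed.

Lemma del_at0 x s : del_at 0 (x :: s) = s.
Proof. by rewrite /del_at /= drop0. Qed.

Lemma del_atS k x s : del_at k.+1 (x :: s) = x :: del_at k s.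
Proof. by []. Qed.

Lemma del_at_nil k : del_at k [::] = [::] :> seq X.
Proof. by case: k. Qed.

Lemma size_del_at k s : (k < size s)%N -> size (del_at k s) = (size s).-1.
Proof.
elim: s k => [|x s IH] [|k] //= lt_ks; first by rewrite del_at0.
by rewrite IH //; case: s IH lt_ks.
Qed.

Lemma del_atC k' k s : (k' < k)%N ->
  del_at k' (del_at k s) = del_at k.-1 (del_at k' s).
Proof.
elim: s k k' => [|x s IH] [|k] [|k'] // lt_k'k; rewrite ?del_at_nil //.
  by rewrite del_atS !del_at0.
by case: k lt_k'k => // k lt_k'k; rewrite !del_atS IH.
Qed.

Lemma chain_len_del_at_le k s : chain_len d (del_at k s) <= chain_len d s.
Proof.
elim: s k => [|x [|y s] IH] [|[|k]]; rewrite ?del_at_nil ?del_at0 ?chain_len1 //.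
- by rewrite chain_len_cons2 lerDr dist_ge0.
- case: s {IH} => [|z s]; first by rewrite chain_len_cons2 !chain_len1 addr0 dist_ge0.
  by rewrite del_atS del_at0 !chain_len_cons2 addrA lerD2r dist_triangle.
- by rewrite del_atS del_atS !chain_len_cons2 -del_atS lerD2l IH.
Qed.

Lemma chain_len_del_at2 k k' s :
  (chain_len d (del_at k' (del_at k s)) == chain_len d s) =
  (chain_len d (del_at k s) == chain_len d s) &&
  (chain_len d (del_at k' (del_at k s)) == chain_len d (del_at k s)).
Proof.
have le1 := chain_len_del_at_le k' (del_at k s); have le2 := chain_len_del_at_le k s.
apply/eqP/andP => [e|[/eqP-> /eqP-> //]]; rewrite -e.
by split; apply/eqP/le_anti; rewrite ?le1 ?le2 // e ?le1 ?le2.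
Qed.

Lemma sorted_del_at k s : sorted (fun a b => a != b) s ->
  chain_len d (del_at k s) = chain_len d s ->
  sorted (fun a b => a != b) (del_at k s).
Proof.
elim: s k => [|x s IH] [|k]; rewrite ?del_at_nil ?del_at0 //; first by move=> /path_sorted.
case: s IH => [|y s] IH; first by rewrite del_atS del_at_nil.
case/andP=> xy sorted_ys; case: k => [|k].
  rewrite del_atS del_at0; case: s sorted_ys {IH} => [|z s] // /andP[_ sorted_zs].
  rewrite !chain_len_cons2 addrA => /addIr e; apply/andP; split; last exact: sorted_zs.
  apply/eqP => xz; move/eqP: e; rewrite -xz dist_xx eq_sym paddr_eq0 ?dist_ge0 //.
  by rewrite (gt_eqF (dist_gt0 xy)).
rewrite del_atS del_atS !chain_len_cons2 -del_atS => /addrI e.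
by rewrite /= xy; apply: IH k.+1 sorted_ys e.
Qed.

Lemma chain_len_ge_steps (delta : R) :
  (forall x y, x != y -> delta <= d x y) ->
  forall s, sorted (fun a b => a != b) s ->
  ((size s).-1)%:R * delta <= chain_len d s.
Proof.
move=> delta_le; elim=> [|x [|y s] IH]; rewrite ?mul0r ?chain_len1 //.
case/andP=> xy sorted_ys; rewrite chain_len_cons2 /= -addn1 natrD mulrDl mul1r addrC.
by rewrite lerD ?delta_le ?IH.
Qed.

End QuasiMetric.

Section Boundary.
Variables (R : realType) (X : finType) (d : X -> X -> R).
Hypothesis hd : is_quasi_metric d.
Implicit Types (t w : seq X).

Definition face_coef t w : rat :=
  \sum_(0 <= k < size t)
    (-1) ^+ k * ((chain_len d (del_at k t) == chain_len d t) && (del_at k t == w))%:R.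

Lemma MH_bdE l n i j :
  MH_bd d l n i j = face_coef (enum_val (A := MC d l n.+1) i) (enum_val (A := MC d l n) j).
Proof.
rewrite mxE /face_coef size_tuple big_mkord big_mkcond /=.
by apply: eq_bigr => k _; case: ifP; rewrite ?mulr1 ?mulr0.
Qed.

Lemma sum_MC_face_coef l n (t : n.+3.-tuple X) (g : seq X -> rat) :
  t \in MC d l n.+2 ->
  \sum_(v in MC d l n.+1) face_coef t v * g v =
  \sum_(0 <= k < n.+3)
    (-1) ^+ k * (chain_len d (del_at k t) == chain_len d t)%:R * g (del_at k t).
Proof.
rewrite inE => /andP[sorted_t /eqP len_t].
rewrite /face_coef size_tuple; under eq_bigr do rewrite mulr_suml.
rewrite exchange_big; apply: eq_big_nat => k /andP[_ lt_k].
case: (chain_len d (del_at k t) =P chain_len d t) => [e|_]; last first.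
  by rewrite big1 => [|v _]; rewrite /= mulr0 mul0r.
have size_v : size (del_at k t) == n.+2 by rewrite size_del_at size_tuple.
pose v0 : n.+2.-tuple X := Tuple size_v.
have v0_MC : v0 \in MC d l n.+1 by rewrite inE (sorted_del_at hd) //= e len_t eqxx.
rewrite (bigD1 v0) //= eqxx [X in _ + X]big1 ?addr0 // => v /andP[_ v_v0].
suff /negbTE-> : del_at k t != val v by rewrite mulr0 mul0r.
by apply: contraNneq v_v0 => e'; apply/eqP/val_inj.
Qed.

Lemma MH_bd_mulmx l n : MH_bd d l n.+1 *m MH_bd d l n = 0.
Proof.
apply/matrixP => i j; rewrite !mxE; under eq_bigr do rewrite !MH_bdE.
rewrite -(big_enum_val (fun v : n.+2.-tuple X =>
  face_coef (enum_val i) v * face_coef v (enum_val j))) /=.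
rewrite (sum_MC_face_coef (fun v => face_coef v (enum_val j))) ?enum_valP //.
set t := val (enum_val i); set w := val (enum_val j).
pose f k k' : rat := (-1) ^+ (k + k') *
  ((chain_len d (del_at k' (del_at k t)) == chain_len d t) &&
   (del_at k' (del_at k t) == w))%:R.
rewrite (eq_big_nat _ _ (F2 := fun k => \sum_(0 <= k' < n.+2) f k k')); last first.
  move=> k /andP[_ lt_k]; rewrite /face_coef size_del_at ?size_tuple // mulr_sumr.
  apply: eq_bigr => k' _; rewrite /f (chain_len_del_at2 hd) exprD.
  case: (chain_len d (del_at k t) == chain_len d t) => /=.
    by rewrite mulr1 mulrA.
  by rewrite !mulr0 mul0r.
apply: sum_faces_cancel => a b le_ab.
by rewrite /f del_atC // addSn addnC exprS mulN1r mulNr.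
Qed.

End Boundary.

Lemma sum_tupleS (V : nmodType) (T : finType) n (F : n.+1.-tuple T -> V) :
  \sum_(t : n.+1.-tuple T) F t = \sum_(a : T) \sum_(t : n.-tuple T) F [tuple of a :: t].
Proof.
rewrite pair_big /= (reindex (fun p : T * n.-tuple T => [tuple of p.1 :: p.2])) //=.
exists (fun t : n.+1.-tuple T => (thead t, [tuple of behead t])) => [[a t]|t] _ /=.
  by rewrite theadE; congr pair; apply: val_inj.
by rewrite -tuple_eta.
Qed.

Lemma sum_tuple0 (V : nmodType) (T : finType) (F : 0.-tuple T -> V) :
  \sum_(t : 0.-tuple T) F t = F [tuple].
Proof. by rewrite (big_pred1 [tuple]) // => t /=; apply/esym/eqP; exact: tuple0. Qed.

Section Chains.
Variables (R : realType) (X : finType) (d : X -> X -> R).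
Hypothesis hd : is_quasi_metric d.
Implicit Types (x y z : X) (l : R).

Definition is_chain l x y (s : seq X) : bool :=
  [&& sorted (fun a b => a != b) s, chain_len d s == l, head x s == x & last x s == y].

Definition nchains k x y l : rat := \sum_(t : k.+1.-tuple X) (is_chain l x y t)%:R.

Lemma is_chain_cons2 l x y a z s :
  is_chain l x y [:: a, z & s] =
  [&& a == x, x != z & is_chain (l - d x z) z y (z :: s)].
Proof.
rewrite /is_chain chain_len_cons2 (addrC (d a z)) [_ + _ == l]eq_sym -subr_eq.
rewrite [l - _ == _]eq_sym.
by case: (a =P x) => [<-|/eqP/negbTE ax] /=; rewrite ?eqxx ?ax ?andbF ?andTb // -andbA.
Qed.

Lemma is_chain_tcons k l x y a (t : k.+1.-tuple X) :
  is_chain l x y [tuple of a :: t] =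
  [&& a == x, x != thead t & is_chain (l - d x (thead t)) (thead t) y t].
Proof. by case: t => [[|b s] //= sz]; rewrite is_chain_cons2. Qed.

Lemma nchains0 x y l : nchains 0 x y l = ((x == y) && (l == 0))%:R.
Proof.
rewrite /nchains sum_tupleS (bigD1 x) //= sum_tuple0 big1 ?addr0 => [|a ax].
  by rewrite /is_chain chain_len1 /= eqxx [0 == l]eq_sym andbC.
by rewrite sum_tuple0 /is_chain /= (negbTE ax) !andbF.
Qed.

Lemma nchainsS k x y l :
  nchains k.+1 x y l = \sum_(z | z != x) nchains k z y (l - d x z).
Proof.
rewrite /nchains sum_tupleS (bigD1 x) //= [X in _ + X]big1 ?addr0 => [|a ax]; last first.
  by apply: big1 => t _; rewrite is_chain_tcons (negbTE ax).
under eq_bigr => t _ do rewrite is_chain_tcons eqxx.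
rewrite (partition_big (fun t : k.+1.-tuple X => thead t) xpredT) //= [RHS]big_mkcond.
apply: eq_bigr => z _; rewrite eq_sym; case: (x =P z) => [<-|/eqP xz] /=.
  by rewrite big1 // => t /eqP->; rewrite eqxx.
rewrite [RHS](bigID (fun t : k.+1.-tuple X => thead t == z)) /= [X in _ = _ + X]big1 ?addr0.
  by apply: eq_bigr => t /eqP->; rewrite xz.
by move=> t zt; rewrite (tuple_eta t) /is_chain /= (negbTE zt) andFb !andbF.
Qed.

Lemma sum_nchains_dist k x y l :
  \sum_z nchains k z y (l - d x z) = nchains k x y l + nchains k.+1 x y l.
Proof. by rewrite (bigD1 x) //= dist_xx // subr0 nchainsS. Qed.

Lemma sum_nchains k l : \sum_x \sum_y nchains k x y l = #|MC d l k|%:R.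
Proof.
rewrite /nchains; under eq_bigr do rewrite exchange_big.
rewrite exchange_big /= -sum1_card natr_sum [RHS]big_mkcond /=.
apply: eq_bigr => t _; rewrite (bigD1 (thead t)) //= [X in _ + X]big1 ?addr0 => [|x]; last first.
  rewrite eq_sym => xt; apply: big1 => y _.
  by rewrite (tuple_eta t) /is_chain /= (negbTE xt) andFb !andbF.
rewrite (bigD1 (last (thead t) (behead t))) //= big1 ?addr0 => [|y]; last first.
  by rewrite eq_sym => yt; rewrite (tuple_eta t) /is_chain /= (negbTE yt) !andbF.
by rewrite inE (tuple_eta t) /is_chain /= !eqxx !andbT; case: (_ && _).
Qed.

Lemma nchains_neq0 k x y l :
  nchains k x y l != 0 -> exists t : k.+1.-tuple X, t \in MC d l k.
Proof.
case: (pickP (fun t : k.+1.-tuple X => is_chain l x y t)) => [t|none].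
  by case/and4P=> sorted_t len_t _ _ _; exists t; rewrite inE sorted_t len_t.
by rewrite /nchains big1 ?eqxx // => t _; rewrite none.
Qed.

End Chains.

Lemma hahn_of_finite_below (R : realType) (f : R -> rat) :
  (forall L, exists s : seq R, forall l, f l != 0 -> l <= L -> l \in s) -> hahn f.
Proof.
move=> fin S S_supp [l0 Sl0]; have [s s_supp] := fin l0.
pose m := \big[Order.min/l0]_(l <- s | `[< S l >]) l.
exists m; split.
  by apply: big_ind => // [a b Sa Sb|l /asboolP//]; case: leP.
move=> l Sl; case: (leP l l0) => [le_l0|/ltW le_l0l]; first last.
  by apply: le_trans le_l0l; apply: bigmin_le_id.
by apply: ge_bigmin_seq; [exact: s_supp (S_supp _ Sl) le_l0 | apply/asboolP].
Qed.

Section Magnitude.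
Variables (R : realType) (X : finType) (d : X -> X -> R).
Hypothesis hd : is_quasi_metric d.
Implicit Types (x y z : X) (l : R).

Definition min_dist : R := \big[Order.min/1]_(p : X * X | p.1 != p.2) d p.1 p.2.

Lemma min_dist_gt0 : 0 < min_dist.
Proof.
apply: (big_ind (fun v => 0 < v)) => // [a b a_gt0 b_gt0|[x y] /= xy].
  by rewrite lt_min a_gt0.
exact: dist_gt0.
Qed.

Lemma min_dist_le x y : x != y -> min_dist <= d x y.
Proof. by move=> xy; rewrite /min_dist (bigD1 (x, y)) //= ge_min lexx. Qed.

Lemma MC_len_ge k l (t : k.+1.-tuple X) : t \in MC d l k -> k%:R * min_dist <= l.
Proof.
rewrite inE => /andP[sorted_t /eqP <-].
by have := chain_len_ge_steps min_dist_le sorted_t; rewrite size_tuple.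
Qed.

Lemma MC_eq0 M k l : l < M%:R * min_dist -> (M <= k)%N -> MC d l k = set0.
Proof.
move=> lt_l le_Mk.
have le_Mk' : M%:R * min_dist <= k%:R * min_dist by rewrite ler_pM2r ?min_dist_gt0 // ler_nat.
apply/setP => t; rewrite in_set0; apply/negP => /MC_len_ge le_kl.
by have := lt_le_trans lt_l (le_trans le_Mk' le_kl); rewrite ltxx.
Qed.

Lemma nchains_eq0 M k l :
  l < M%:R * min_dist -> (M <= k)%N -> forall x y, nchains d k x y l = 0.
Proof.
move=> lt_l le_Mk x y; apply/eqP; apply: contraT => /nchains_neq0[t].
by rewrite (MC_eq0 lt_l le_Mk) inE.
Qed.

Definition step_bound l : nat := Num.bound (`|l| / min_dist).

Lemma step_boundP l : l < (step_bound l)%:R * min_dist.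
Proof.
have := archi_boundP (divr_ge0 (normr_ge0 l) (ltW min_dist_gt0)).
rewrite -ltr_pdivrMr ?min_dist_gt0 //; apply: le_lt_trans.
by rewrite ler_pM2r ?invr_gt0 ?min_dist_gt0 // ler_norm.
Qed.

Definition Zinv x y l : rat :=
  \sum_(0 <= k < step_bound l) (-1) ^+ k * nchains d k x y l.

Lemma ZinvE M l : l < M%:R * min_dist ->
  forall x y, Zinv x y l = \sum_(0 <= k < M) (-1) ^+ k * nchains d k x y l.
Proof.
move=> lt_l x y; rewrite /Zinv; case: (leqP M (step_bound l)) => [le_M | /ltnW le_M].
  by rewrite (big_nat_trunc le_M) // => k le_Mk; rewrite (nchains_eq0 lt_l le_Mk) mulr0.
rewrite [RHS](big_nat_trunc le_M) // => k le_k.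
by rewrite (nchains_eq0 (step_boundP l) le_k) mulr0.
Qed.

Lemma Zinv_inverse : is_inverse_similarity d Zinv.
Proof.
move=> x y l; set M := step_bound l.
have lt_M z : l - d x z < M%:R * min_dist.
  by apply: le_lt_trans (step_boundP l); rewrite lerBlDr lerDl dist_ge0.
under eq_bigr => z _ do rewrite (ZinvE (lt_M z)).
rewrite exchange_big /=; under eq_bigr => k _ do rewrite -mulr_sumr (sum_nchains_dist hd).
pose u k := - (-1) ^+ k * nchains d k x y l.
rewrite (eq_bigr (fun k => u k.+1 - u k)) => [|k _]; last by rewrite /u exprS; ring.
rewrite telescope_sumr // /u (nchains_eq0 (step_boundP l)) // nchains0.
by case: (_ && _); rewrite /=; ring.
Qed.

Lemma Zinv_neq0 x y l :
  Zinv x y l != 0 -> exists k (t : k.+1.-tuple X), t \in MC d l k.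
Proof.
move=> Zinv_neq0.
have /existsP[k /nchains_neq0[t t_MC]] : [exists k : 'I_(step_bound l), nchains d k x y l != 0].
  move: Zinv_neq0; apply: contraNT => /existsPn nchains0.
  by rewrite /Zinv big_mkord big1 // => k _; rewrite (eqP (negbNE (nchains0 k))) mulr0.
by exists k, t.
Qed.

Lemma Zinv_hahn x y : hahn (Zinv x y).
Proof.
apply: hahn_of_finite_below => L.
exists (flatten [seq [seq chain_len d t | t : k.+1.-tuple X] | k <- iota 0 (step_bound L)]).
move=> l /Zinv_neq0[k [t t_MC]] le_lL; apply/flattenP.
exists [seq chain_len d t | t : k.+1.-tuple X].
  apply/mapP; exists k => //; rewrite mem_iota add0n -(ltr_nat R) -(ltr_pM2r min_dist_gt0).
  exact: le_lt_trans (MC_len_ge t_MC) (le_lt_trans le_lL (step_boundP L)).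
by move: t_MC; rewrite inE => /andP[_ /eqP <-]; apply: image_f.
Qed.

Lemma MH_rankE l n : MH_rank d l n = homology_rank (MH_bd d l) n.
Proof. by case: n. Qed.

Lemma euler_partial_Zinv N l : l < N%:R * min_dist ->
  euler_partial d N l = \sum_x \sum_y Zinv x y l.
Proof.
move=> lt_l; rewrite /euler_partial /rkHM; under eq_bigr do rewrite MH_rankE.
rewrite euler_poincare ?(MC_eq0 lt_l) ?cards0 //; last exact: MH_bd_mulmx.
under eq_bigr do rewrite -sum_nchains mulr_sumr.
rewrite exchange_big; apply: eq_bigr => x _; under eq_bigr do rewrite mulr_sumr.
rewrite exchange_big; apply: eq_bigr => y _.
by rewrite (ZinvE lt_l) big_mkord.
Qed.

Lemma euler_partial_cvg :
  hahn_converges (euler_partial d) (fun l => \sum_x \sum_y Zinv x y l).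
Proof.
move=> L; exists (step_bound L) => N le_N l lt_lL; apply: euler_partial_Zinv.
apply: lt_le_trans (lt_trans lt_lL (step_boundP L)) _.
by rewrite ler_pM2r ?min_dist_gt0 // ler_nat.
Qed.

End Magnitude.

Theorem corollary6p18 (R : realType) (X : finType) (d : X -> X -> R)
  (hd : is_quasi_metric d) :
  exists W : X -> X -> R -> rat,
    (forall x y, hahn (W x y)) /\
    is_inverse_similarity d W /\
    hahn_converges (euler_partial d)
                   (fun l => \sum_(x : X) \sum_(y : X) W x y l).
Proof.
exists (Zinv d); split; first exact: Zinv_hahn.
by split; [exact: Zinv_inverse | exact: euler_partial_cvg].
Qed.
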